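(* Suppose $\tau_L>\delta_L+1$ and $\delta_L>0$. Let $K=\left[-\frac{1}{\lambda_L^u},\hat m_{\rm max}\right]$ for some $\hat m_{\rm max}\in[0,1]$. The cone $\hat\Psi_K$ is invariant and expanding for $A_L^{-1}$ with expansion factor $\hat c_L=\min\left\{\frac{1}{\lambda_L^s},\frac{1+\lambda_L^s}{\sqrt2\,\lambda_L^s}\right\}$.
   Context: Let $A_L=\begin{bmatrix}\tau_L&1\\-\delta_L&0\end{bmatrix}$; under the hypotheses its eigenvalues are real with $0<\lambda_L^s<1<\lambda_L^u$. For an interval $K\subset\mathbb{R}$, $\hat\Psi_K=\left\{t\begin{bmatrix}\hat m\\1\end{bmatrix}: \hat m\in K,\ t\in\mathbb{R}\right\}$. For a real $2\times2$ matrix $A$, the cone $\hat\Psi_K$ is invariant for $A$ if $Av\in\hat\Psi_K$ for all $v\in\hat\Psi_K$, and expanding with expansion factor $c>1$ if $\|Av\|\ge c\|v\|$ for all $v\in\hat\Psi_K$ (Euclidean norm). *)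

From HB Require Import structures.
From mathcomp Require Import all_boot all_order all_algebra.
Set Implicit Arguments. Unset Strict Implicit. Unset Printing Implicit Defensive.
Import Order.TTheory GRing.Theory Num.Theory.
Local Open Scope ring_scope.

Section Defs.
Variable R : rcfType.

Definition AL (tau delta : R) : 'M[R]_2 :=
  \matrix_(i < 2, j < 2)
    if (i == 0 :> nat) then (if (j == 0 :> nat) then tau else 1)
    else (if (j == 0 :> nat) then - delta else 0).

(* eigenvalues of A_L (roots of x^2 - tau x + delta) *)
Definition lambda_s (tau delta : R) : R := (tau - Num.sqrt (tau ^+ 2 - 4 * delta)) / 2.
Definition lambda_u (tau delta : R) : R := (tau + Num.sqrt (tau ^+ 2 - 4 * delta)) / 2.

Definition vec2 (a b : R) : 'cV[R]_2 :=
  \col_(i < 2) if (i == 0 :> nat) then a else b.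

Definition enorm (v : 'cV[R]_2) : R := Num.sqrt (v 0 0 ^+ 2 + v 1 0 ^+ 2).

Definition hatPsi (K : R -> Prop) (v : 'cV[R]_2) : Prop :=
  exists m t, K m /\ v = t *: vec2 m 1.

Definition cone_invariant (A : 'M[R]_2) (C : 'cV[R]_2 -> Prop) : Prop :=
  forall v, C v -> C (A *m v).

Definition cone_expanding (A : 'M[R]_2) (C : 'cV[R]_2 -> Prop) (c : R) : Prop :=
  1 < c /\ forall v, C v -> c * enorm v <= enorm (A *m v).

End Defs.

(* In eigenvalue coordinates delta = ls * lu and tau = ls + lu, the inverse of
   A_L sends the ray of slope m to the ray of slope -1 / (delta m + tau), and
   delta m + tau >= lu on K, whence invariance.  The squared expansion condition
   c^2 delta^2 (m^2 + 1) <= 1 + (delta m + tau)^2 is a concave quadratic inequality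
   in m as soon as c >= 1, so it only has to be checked at m = -1/lu and m = 1,
   where it reduces to c ls <= 1 and sqrt 2 c ls <= 1 + ls respectively. *)

From HB Require Import structures.
From mathcomp Require Import all_boot all_order all_algebra.
From mathcomp Require Import ring lra.
Set Implicit Arguments.
Unset Strict Implicit.
Unset Printing Implicit Defensive.
Import Order.TTheory GRing.Theory Num.Theory.
Local Open Scope ring_scope.

Lemma concave_quadratic_ge0 (R : realFieldType) (a b d x0 x1 x : R) :
  a <= 0 -> x0 <= x <= x1 ->
  0 <= a * x0 ^+ 2 + b * x0 + d -> 0 <= a * x1 ^+ 2 + b * x1 + d ->
  0 <= a * x ^+ 2 + b * x + d.
Proof.
move=> a_le0 /andP[x0x xx1] g0 g1.
have [x01 | ] := ltrP x0 x1; last by move=> x10; have -> : x = x0 by lra.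
have chord : (x1 - x0) * (a * x ^+ 2 + b * x + d) =
  (x1 - x) * (a * x0 ^+ 2 + b * x0 + d) + (x - x0) * (a * x1 ^+ 2 + b * x1 + d)
  + (- a) * (x1 - x0) * ((x - x0) * (x1 - x)) by ring.
have : 0 <= (x1 - x0) * (a * x ^+ 2 + b * x + d).
  rewrite chord !addr_ge0 ?mulr_ge0 ?oppr_ge0 ?subr_ge0 //; lra.
by rewrite pmulr_rge0 // subr_gt0.
Qed.

Lemma expansion_sq_eigen (R : rcfType) (s u c m : R) :
  0 < s -> 1 < u -> 1 <= c -> c * s <= 1 -> c * (Num.sqrt 2 * s) <= 1 + s ->
  - (1 / u) <= m <= 1 ->
  (c * (s * u)) ^+ 2 * (m ^+ 2 + 1) <= 1 + (s * u * m + (s + u)) ^+ 2.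
Proof.
move=> s_gt0 u_gt1 c_ge1 cs_le1 c_sqrt2 m_in.
pose g x := 1 + (s * u * x + (s + u)) ^+ 2 - (c * (s * u)) ^+ 2 * (x ^+ 2 + 1).
have gE x : g x = (s * u) ^+ 2 * (1 - c ^+ 2) * x ^+ 2 + 2 * (s * u) * (s + u) * x
                  + (1 + (s + u) ^+ 2 - (c * (s * u)) ^+ 2) by rewrite /g; ring.
rewrite -subr_ge0 -/(g m) gE.
apply: (concave_quadratic_ge0 _ m_in).
- by rewrite mulr_ge0_le0 ?sqr_ge0 // subr_le0 exprn_ege1.
- rewrite -gE /g.
  have -> : 1 + (s * u * - (1 / u) + (s + u)) ^+ 2 - (c * (s * u)) ^+ 2 * ((- (1 / u)) ^+ 2 + 1)
      = (1 + u ^+ 2) * (1 - (c * s) ^+ 2) by field; rewrite gt_eqF //; lra.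
  have cs_ge0 : 0 <= c * s by apply: mulr_ge0; lra.
  apply: mulr_ge0; first by rewrite addr_ge0 ?sqr_ge0.
  by rewrite subr_ge0 expr_le1.
- rewrite -gE /g.
  have sqrt2_sq : Num.sqrt 2 ^+ 2 = 2 :> R by rewrite sqr_sqrtr // ler0n.
  have -> : (c * (s * u)) ^+ 2 * (1 ^+ 2 + 1) = (c * (Num.sqrt 2 * s) * u) ^+ 2.
    by rewrite !exprMn sqrt2_sq; ring.
  have su_ge0 : 0 <= s * u by apply: mulr_ge0; lra.
  have c_sqrt2_u := ler_wpM2r (ltW (lt_trans ltr01 u_gt1)) c_sqrt2.
  have : (c * (Num.sqrt 2 * s) * u) ^+ 2 <= (s * u * 1 + (s + u)) ^+ 2.
    by rewrite ler_sqr ?nnegrE ?mulr_ge0 ?sqrtr_ge0 //; lra.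
  lra.
Qed.

Lemma min_expansion_factor (R : rcfType) (s : R) : 0 < s -> s < 1 ->
  let c := Num.min (1 / s) ((1 + s) / (Num.sqrt 2 * s)) in
  [/\ 1 < c, c * s <= 1 & c * (Num.sqrt 2 * s) <= 1 + s].
Proof.
move=> s_gt0 s_lt1 c.
have sqrt2_gt0 : 0 < Num.sqrt 2 :> R by rewrite sqrtr_gt0 ltr0n.
have sqrt2_lt2 : Num.sqrt 2 < 2 :> R.
  rewrite -ltr_sqr ?nnegrE ?sqrtr_ge0 ?ler0n // sqr_sqrtr ?ler0n //; lra.
have sqrt2_s_gt0 : 0 < Num.sqrt 2 * s by rewrite mulr_gt0.
split.
- rewrite lt_min !ltr_pdivlMr // !mul1r s_lt1 /=; nra.
- by rewrite -ler_pdivlMr // ge_min lexx.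
- by rewrite -ler_pdivlMr // ge_min lexx orbT.
Qed.

Section Vec2.
Variable R : rcfType.

Lemma scale_vec2 (t a b : R) : t *: vec2 a b = vec2 (t * a) (t * b).
Proof. by apply/matrixP => i j; rewrite !mxE; case: ifP. Qed.

Lemma enorm_vec2 (a b : R) : enorm (vec2 a b) = Num.sqrt (a ^+ 2 + b ^+ 2).
Proof. by rewrite /enorm !mxE. Qed.

Lemma enormZ (t : R) (v : 'cV[R]_2) : enorm (t *: v) = `|t| * enorm v.
Proof.
by rewrite /enorm !mxE !exprMn -mulrDr sqrtrM ?sqr_ge0 // sqrtr_sqr.
Qed.

Lemma ler_enorm_vec2 (c a b a' b' : R) : 0 <= c ->
  c ^+ 2 * (a ^+ 2 + b ^+ 2) <= a' ^+ 2 + b' ^+ 2 ->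
  c * enorm (vec2 a b) <= enorm (vec2 a' b').
Proof.
move=> c_ge0 le_sq; rewrite !enorm_vec2 -(ger0_norm c_ge0) -sqrtr_sqr.
by rewrite -sqrtrM ?sqr_ge0 // ler_sqrt // addr_ge0 ?sqr_ge0.
Qed.

End Vec2.

Section InverseAL.
Variables (R : rcfType) (tau delta : R).
Local Notation ls := (lambda_s tau delta).
Local Notation lu := (lambda_u tau delta).

Lemma lambda_sDu : ls + lu = tau.
Proof. by rewrite /lambda_s /lambda_u; field. Qed.

Lemma lambda_s_le_u : ls <= lu.
Proof.
rewrite /lambda_s /lambda_u.
have := sqrtr_ge0 (tau ^+ 2 - 4 * delta); lra.
Qed.

Lemma lambda_sMu : 4 * delta <= tau ^+ 2 -> ls * lu = delta.
Proof.
move=> disc; rewrite /lambda_s /lambda_u.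
have := @sqr_sqrtr R (tau ^+ 2 - 4 * delta); rewrite subr_ge0 => /(_ disc).
set r := Num.sqrt _ => r2; nra.
Qed.

Lemma discr_ge0 : delta + 1 < tau -> 0 < delta -> 4 * delta <= tau ^+ 2.
Proof.
move=> tau_gt delta_gt0.
have tau_sub_gt0 : 0 < tau - delta - 1 by lra.
have tau_add_gt0 : 0 < tau + delta + 1 by lra.
have := sqr_ge0 (delta - 1); nra.
Qed.

Lemma lambda_s_lt1_lt_u : delta + 1 < tau -> 0 < delta -> ls < 1 < lu.
Proof.
move=> tau_gt delta_gt0.
have charpoly_at1_lt0 : (1 - ls) * (1 - lu) < 0.
  have -> : (1 - ls) * (1 - lu) = 1 - (ls + lu) + ls * lu by ring.
  rewrite lambda_sDu lambda_sMu ?discr_ge0 //; lra.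
have := lambda_s_le_u; nra.
Qed.

Lemma lambda_s_gt0 : delta + 1 < tau -> 0 < delta -> 0 < ls.
Proof.
move=> tau_gt delta_gt0.
have /andP[_ lu_gt1] := lambda_s_lt1_lt_u tau_gt delta_gt0.
have := lambda_sMu (discr_ge0 tau_gt delta_gt0); nra.
Qed.

Lemma AL_vec2 (x y : R) : AL tau delta *m vec2 x y = vec2 (tau * x + y) (- delta * x).
Proof.
apply/matrixP => i j; rewrite !mxE !big_ord_recr big_ord0 /= !mxE /=.
by case: i => [[|[|i]] Hi] //=; ring.
Qed.

Lemma det_AL : \det (AL tau delta) = delta.
Proof.
rewrite (expand_det_row _ 0) !big_ord_recr big_ord0 /= /cofactor !det_mx11 !mxE /=.
ring.
Qed.

Lemma invmx_AL_vec2 (a b : R) : delta != 0 ->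
  invmx (AL tau delta) *m vec2 a b = vec2 (- (b / delta)) (a + tau / delta * b).
Proof.
move=> delta_neq0.
have AL_unit : AL tau delta \in unitmx by rewrite unitmxE det_AL unitfE.
have -> : vec2 a b = AL tau delta *m vec2 (- (b / delta)) (a + tau / delta * b).
  by rewrite AL_vec2; congr vec2; field.
by rewrite mulKmx.
Qed.

Lemma invmx_AL_ray (t m : R) : delta != 0 -> delta * m + tau != 0 ->
  invmx (AL tau delta) *m (t *: vec2 m 1) =
  (t * (delta * m + tau) / delta) *: vec2 (- (1 / (delta * m + tau))) 1.
Proof.
move=> delta_neq0 den_neq0.
rewrite -scalemxAr invmx_AL_vec2 // !scale_vec2.
by congr vec2; field; rewrite ?delta_neq0 ?den_neq0.
Qed.

Lemma lambda_u_le_affine (m : R) : delta + 1 < tau -> 0 < delta ->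
  - (1 / lu) <= m -> lu <= delta * m + tau.
Proof.
move=> tau_gt delta_gt0 m_ge.
have /andP[_ lu_gt1] := lambda_s_lt1_lt_u tau_gt delta_gt0.
have ls_gt0 := lambda_s_gt0 tau_gt delta_gt0.
have lu_gt0 : 0 < lu by lra.
have lum_ge0 : 0 <= lu * m + 1.
  have := ler_wpM2l (ltW lu_gt0) m_ge.
  rewrite mulrN div1r mulfV ?gt_eqF //; lra.
have -> : delta * m + tau = ls * (lu * m + 1) + lu.
  by rewrite mulrDr mulrA (lambda_sMu (discr_ge0 tau_gt delta_gt0)) mulr1 -addrA lambda_sDu.
by rewrite lerDr mulr_ge0 // ltW.
Qed.

Lemma invmx_AL_cone_invariant (mmax : R) : delta + 1 < tau -> 0 < delta -> 0 <= mmax ->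
  cone_invariant (invmx (AL tau delta))
    (hatPsi (fun m : R => - (1 / lu) <= m <= mmax)).
Proof.
move=> tau_gt delta_gt0 mmax_ge0 _ [m [t [/andP[m_ge _] ->]]].
have /andP[_ lu_gt1] := lambda_s_lt1_lt_u tau_gt delta_gt0.
have lu_gt0 : 0 < lu by lra.
have lu_le := lambda_u_le_affine tau_gt delta_gt0 m_ge.
have den_gt0 : 0 < delta * m + tau by exact: lt_le_trans lu_le.
rewrite invmx_AL_ray ?gt_eqF //.
exists (- (1 / (delta * m + tau))), (t * (delta * m + tau) / delta); split => //.
rewrite lerN2 !div1r lef_pV2 ?posrE // lu_le /=.
by rewrite (le_trans _ mmax_ge0) // oppr_le0 invr_ge0 ltW.
Qed.

Lemma invmx_AL_cone_expanding (mmax c : R) : delta + 1 < tau -> 0 < delta -> mmax <= 1 ->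
  1 < c -> c * ls <= 1 -> c * (Num.sqrt 2 * ls) <= 1 + ls ->
  cone_expanding (invmx (AL tau delta))
    (hatPsi (fun m : R => - (1 / lu) <= m <= mmax)) c.
Proof.
move=> tau_gt delta_gt0 mmax_le1 c_gt1 c_ls c_sqrt2.
split=> // _ [m [t [/andP[m_ge m_le] ->]]].
have /andP[_ lu_gt1] := lambda_s_lt1_lt_u tau_gt delta_gt0.
have m_in : - (1 / lu) <= m <= 1 by rewrite m_ge (le_trans m_le).
have := expansion_sq_eigen (lambda_s_gt0 tau_gt delta_gt0) lu_gt1 (ltW c_gt1) c_ls c_sqrt2 m_in.
rewrite lambda_sMu ?discr_ge0 // lambda_sDu => expansion.
rewrite -scalemxAr invmx_AL_vec2 ?gt_eqF // !enormZ mulrCA ler_wpM2l //.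
apply: ler_enorm_vec2; first lra.
have -> : (- (1 / delta)) ^+ 2 + (m + tau / delta * 1) ^+ 2 = (1 + (delta * m + tau) ^+ 2) / delta ^+ 2.
  by field; rewrite gt_eqF.
by rewrite ler_pdivlMr ?exprn_gt0 // expr1n mulrAC -exprMn.
Qed.

End InverseAL.

Theorem lemma6p1 (R : rcfType) (tau delta mmax : R) :
  tau > delta + 1 -> delta > 0 -> 0 <= mmax <= 1 ->
  let ls := lambda_s tau delta in
  let lu := lambda_u tau delta in
  let K := fun m : R => - (1 / lu) <= m <= mmax in
  let c := Num.min (1 / ls) ((1 + ls) / (Num.sqrt 2 * ls)) in
  cone_invariant (invmx (AL tau delta)) (hatPsi K) /\
  cone_expanding (invmx (AL tau delta)) (hatPsi K) c.
Proof.
move=> tau_gt delta_gt0 /andP[mmax_ge0 mmax_le1] ls lu K c.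
have /andP[ls_lt1 _] := lambda_s_lt1_lt_u tau_gt delta_gt0.
have [c_gt1 c_ls c_sqrt2] := min_expansion_factor (lambda_s_gt0 tau_gt delta_gt0) ls_lt1.
split; first exact: invmx_AL_cone_invariant.
exact: invmx_AL_cone_expanding.
Qed.
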